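(* For every $l\ge\max(|\vec n_1|,|\vec n_2|)$ and all $a'=1,\dots,p_1$, $b'=1,\dots,p_2$, $$(x-y)K^{[l]}_{b',a'}(x,y)=\sum_{b=1}^{p_2}\bar A^{(l)}_{+b,b'}(x)A^{(l-1)}_{-b,a'}(y)-\sum_{a=1}^{p_1}\bar A^{(l-1)}_{-a,b'}(x)A^{(l)}_{+a,a'}(y),$$ $$(x-y)K^{[l]}(x,y)=\sum_{b=1}^{p_2}\bar Q^{(l)}_{+b}(x)Q^{(l-1)}_{-b}(y)-\sum_{a=1}^{p_1}\bar Q^{(l-1)}_{-a}(x)Q^{(l)}_{+a}(y).$$
   Context: Setting: $\mu$ finite Borel measure on an interval, weights $w_{1,a}$ ($a\le p_1$), $w_{2,b}$ ($b\le p_2$), compositions $\vec n_\ell=(n_{\ell,1},\dots,n_{\ell,p_\ell})\in\mathbb N^{p_\ell}$, $|\vec n_\ell|=\sum_an_{\ell,a}$. Each $i\in\mathbb Z_+$ is uniquely $i=q|\vec n_\ell|+n_{\ell,1}+\dots+n_{\ell,a-1}+r$ ($0\le r<n_{\ell,a}$); $a_\ell(i)=a$, $k_\ell(i)=qn_{\ell,a}+r$. $\chi_{\ell,a}(x)$: semi-infinite vector with $i$-th entry $x^{k_\ell(i)}$ if $a_\ell(i)=a$, else $0$; superscript $(i)$ = $i$-th entry, $[l]$ = first $l$ entries. Moment matrix $g_{i,j}=\int x^{k_1(i)+k_2(j)}w_{1,a_1(i)}w_{2,a_2(j)}d\mu$, $g^{[l]}=(g_{i,j})_{0\le i,j<l}$,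 with all $\det g^{[l]}\ne0$ and Gauss–Borel factorization $g=S^{-1}\bar S$ ($S$ unit lower triangular, $\bar S$ upper triangular invertible). $A^{(k)}_a$ = $k$-th entry of $S\chi_{1,a}$, $\bar A^{(k)}_b$ = $k$-th entry of $(\bar S^{-1})^\top\chi_{2,b}$, $Q^{(k)}=\sum_aA^{(k)}_aw_{1,a}$, $\bar Q^{(k)}=\sum_b\bar A^{(k)}_bw_{2,b}$. Kernels: $K^{[l]}_{b',a'}(x,y)=\sum_{k=0}^{l-1}\bar A^{(k)}_{b'}(x)A^{(k)}_{a'}(y)$, $K^{[l]}(x,y)=\sum_{k=0}^{l-1}Q^{(k)}(y)\bar Q^{(k)}(x)$. For an integer $m$ and $a\in\{1,\dots,p_1\}$: $m_{+a}$ is the smallest integer $\ge m$ with $a_1(m_{+a})=a$, and $m_{-a}$ the largest integer $\le m$ with $a_1(m_{-a})=a$; $\bar m_{\pm b}$ are defined likewise using $a_2$ and $b\in\{1,\dots,p_2\}$. $e_j$ denotes the $j$-th canonical basis vector (of the appropriate finite length). Associated polynomials: $A^{(l)}_{+a,a'}(y)=\chi_{1,a'}^{(l_{+a})}(y)-(g_{l_{+a},0},\dots,g_{l_{+a},l-1})(g^{[l]})^{-1}\chi_{1,a'}^{[l]}(y)$; $\bar A^{(m)}_{-a,b'}(x)=(\chi_{2,b'}^{[m+1]}(x))^\top(g^{[m+1]})^{-1}e_{m_{-a}}$; $A^{(m)}_{-b,a'}(y)=e_{\bar m_{-b}}^\top(g^{[m+1]})^{-1}\chi_{1,a'}^{[m+1]}(y)$;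 $\bar A^{(l)}_{+b,b'}(x)=\chi_{2,b'}^{(\bar l_{+b})}(x)-(\chi_{2,b'}^{[l]}(x))^\top(g^{[l]})^{-1}(g_{0,\bar l_{+b}},\dots,g_{l-1,\bar l_{+b}})^\top$. Associated linear forms: $Q^{(m)}_{\pm a}=\sum_{a'}A^{(m)}_{+a,a'}w_{1,a'}$ (for $+$), $\bar Q^{(m)}_{-a}=\sum_{b'}\bar A^{(m)}_{-a,b'}w_{2,b'}$, $Q^{(m)}_{-b}=\sum_{a'}A^{(m)}_{-b,a'}w_{1,a'}$, $\bar Q^{(m)}_{+b}=\sum_{b'}\bar A^{(m)}_{+b,b'}w_{2,b'}$. *)

From HB Require Import structures.
From mathcomp Require Import all_boot all_order all_algebra.
From mathcomp Require Import all_classical all_reals all_analysis.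
Set Implicit Arguments. Unset Strict Implicit. Unset Printing Implicit Defensive.
Import Order.TTheory GRing.Theory Num.Theory.
Import numFieldNormedType.Exports.
Local Open Scope classical_set_scope.
Local Open Scope ring_scope.

(* ---------- index bookkeeping for a composition n = (n_0,...,n_{p-1}) ----
   Weights/blocks are indexed 0..p-1 (the paper uses 1..p).              *)

Definition ntot (p : nat) (n : 'I_p -> nat) : nat := (\sum_(a < p) n a)%N.
Definition cum (p : nat) (n : 'I_p -> nat) (a : nat) : nat :=
  (\sum_(b < p | (b < a)%N) n b)%N.
Definition nblk (p : nat) (n : 'I_p -> nat) (a : nat) : nat := (cum n a.+1 - cum n a)%N.
Definition blk (p : nat) (n : 'I_p -> nat) (i : nat) : nat :=
  find (fun a => (i %% ntot n < cum n a.+1)%N) (iota 0 p).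
Definition kk (p : nat) (n : 'I_p -> nat) (i : nat) : nat :=
  ((i %/ ntot n) * nblk n (blk n i) + (i %% ntot n - cum n (blk n i)))%N.

Definition chi (R : ringType) (p : nat) (n : 'I_p -> nat) (a : nat) (x : R) (i : nat) : R :=
  if blk n i == a then x ^+ kk n i else 0.
Definition chiv (R : ringType) (p : nat) (n : 'I_p -> nat) (a : nat) (x : R) (l : nat)
  : 'cV[R]_l := \col_(i < l) chi n a x i.

Definition mplus (p : nat) (n : 'I_p -> nat) (m a : nat) : nat :=
  (m + find (fun d => blk n (m + d) == a) (iota 0 (ntot n)))%N.
(* m_{-a}: largest integer <= m with label a (meaningful when it exists) *)
Definition mminus (p : nat) (n : 'I_p -> nat) (m a : nat) : nat :=
  (m - find (fun d => blk n (m - d) == a) (iota 0 m.+1))%N.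

Definition gmom (R : realType) (mu : {measure set R -> \bar R}) (D : set R)
  (p1 p2 : nat) (n1 : 'I_p1 -> nat) (n2 : 'I_p2 -> nat)
  (w1 w2 : nat -> R -> R) (i j : nat) : R :=
  Rintegral mu D (fun x => x ^+ (kk n1 i + kk n2 j)%N * w1 (blk n1 i) x * w2 (blk n2 j) x).

Definition trunc (R : ringType) (g : nat -> nat -> R) (l : nat) : 'M[R]_l :=
  \matrix_(i < l, j < l) g i j.

Definition Apol (R : ringType) (S : nat -> nat -> R) (p1 : nat) (n1 : 'I_p1 -> nat)
  (a k : nat) (y : R) : R := \sum_(j < k.+1) S k j * chi n1 a y j.
(* Abar^{(k)}_b(x) = k-th entry of (Sbar^{-1})^T chi_{2,b}(x); as Sbar is upper
   triangular, the column k of Sbar^{-1} is the last column of (Sbar^{[k+1]})^{-1} *)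
Definition Abarpol (R : fieldType) (Sbar : nat -> nat -> R) (p2 : nat) (n2 : 'I_p2 -> nat)
  (b k : nat) (x : R) : R :=
  \sum_(j < k.+1) (invmx (trunc Sbar k.+1)) j ord_max * chi n2 b x j.

Definition Qform (R : ringType) S p1 (n1 : 'I_p1 -> nat) (w1 : nat -> R -> R) (k : nat) (y : R) : R :=
  \sum_(a < p1) Apol S n1 a k y * w1 a y.
Definition Qbarform (R : fieldType) Sbar p2 (n2 : 'I_p2 -> nat) (w2 : nat -> R -> R) (k : nat) (x : R) : R :=
  \sum_(b < p2) Abarpol Sbar n2 b k x * w2 b x.

Definition Kab (R : fieldType) S Sbar p1 p2 (n1 : 'I_p1 -> nat) (n2 : 'I_p2 -> nat)
  (b' a' l : nat) (x y : R) : R :=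
  \sum_(k < l) Abarpol Sbar n2 b' k x * Apol S n1 a' k y.
Definition Kfull (R : fieldType) S Sbar p1 p2 (n1 : 'I_p1 -> nat) (n2 : 'I_p2 -> nat)
  (w1 w2 : nat -> R -> R) (l : nat) (x y : R) : R :=
  \sum_(k < l) Qform S n1 w1 k y * Qbarform Sbar n2 w2 k x.

Definition Aplus (R : fieldType) (g : nat -> nat -> R) p1 (n1 : 'I_p1 -> nat)
  (a a' l : nat) (y : R) : R :=
  chi n1 a' y (mplus n1 l a)
  - ((\row_(j < l) g (mplus n1 l a) j) *m invmx (trunc g l) *m chiv n1 a' y l) 0 0.
Definition Abarminus (R : fieldType) (g : nat -> nat -> R) p1 p2
  (n1 : 'I_p1 -> nat) (n2 : 'I_p2 -> nat) (a b' m : nat) (x : R) : R :=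
  ((chiv n2 b' x m.+1)^T *m invmx (trunc g m.+1)
     *m (\col_(i < m.+1) (i == mminus n1 m a :> nat)%:R)) 0 0.
Definition Aminus (R : fieldType) (g : nat -> nat -> R) p1 p2
  (n1 : 'I_p1 -> nat) (n2 : 'I_p2 -> nat) (b a' m : nat) (y : R) : R :=
  ((\row_(i < m.+1) (i == mminus n2 m b :> nat)%:R) *m invmx (trunc g m.+1)
     *m chiv n1 a' y m.+1) 0 0.
Definition Abarplus (R : fieldType) (g : nat -> nat -> R) p2 (n2 : 'I_p2 -> nat)
  (b b' l : nat) (x : R) : R :=
  chi n2 b' x (mplus n2 l b)
  - ((chiv n2 b' x l)^T *m invmx (trunc g l) *m (\col_(i < l) g i (mplus n2 l b))) 0 0.

Definition Qplus (R : fieldType) g p1 (n1 : 'I_p1 -> nat) (w1 : nat -> R -> R) (a m : nat) (y : R) : R :=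
  \sum_(a' < p1) Aplus g n1 a a' m y * w1 a' y.
Definition Qbarminus (R : fieldType) g p1 p2 (n1 : 'I_p1 -> nat) (n2 : 'I_p2 -> nat)
  (w2 : nat -> R -> R) (a m : nat) (x : R) : R :=
  \sum_(b' < p2) Abarminus g n1 n2 a b' m x * w2 b' x.
Definition Qminus (R : fieldType) g p1 p2 (n1 : 'I_p1 -> nat) (n2 : 'I_p2 -> nat)
  (w1 : nat -> R -> R) (b m : nat) (y : R) : R :=
  \sum_(a' < p1) Aminus g n1 n2 b a' m y * w1 a' y.
Definition Qbarplus (R : fieldType) g p2 (n2 : 'I_p2 -> nat) (w2 : nat -> R -> R) (b m : nat) (x : R) : R :=
  \sum_(b' < p2) Abarplus g n2 b b' m x * w2 b' x.

(* Via the Gauss-Borel factorization, [K^{[l]}_{b',a'}(x,y)] is the bilinear form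
   [chi_{2,b'}^{[l]}(x)^T (g^{[l]})^{-1} chi_{1,a'}^{[l]}(y)].  Multiplying by [x] (resp. [y])
   moves each entry of [chi_{2,b'}] (resp. [chi_{1,a'}]) to the next index of the same block,
   and the moment matrix intertwines the two shifts: [g_{i+,j} = g_{i,j+}].  So in
   [(x - y) K] all terms cancel except those from indices [i < l] whose successor leaves the
   truncation.  As [l >= |n|], each block contains exactly one such index, namely
   [(l-1)_{-a}], and its successor is [l_{+a}]; these boundary terms are the associated
   polynomials.  The identity for the linear forms follows by weighting with
   [w_{1,a'}(y) w_{2,b'}(x)] and summing. *)

From HB Require Import structures.
From mathcomp Require Import all_boot all_order all_algebra.
From mathcomp Require Import all_classical all_reals all_analysis.
From mathcomp Require Import zify.
From mathcomp.algebra_tactics Require Import ring.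
Import Order.TTheory GRing.Theory Num.Theory.
Import numFieldNormedType.Exports.
Local Open Scope classical_set_scope.
Local Open Scope ring_scope.

(** * Blocks of a composition *)

Lemma find_iotaP (P : pred nat) (m n : nat) :
  (exists2 j, (j < n)%N & P (m + j)%N) ->
  [/\ (find P (iota m n) < n)%N, P (m + find P (iota m n))%N &
      forall j, (j < find P (iota m n))%N -> ~~ P (m + j)%N].
Proof.
move=> [j jn Pj].
have hasP : has P (iota m n) by apply/hasP; exists (m + j)%N; rewrite ?mem_iota; lia.
have f_n : (find P (iota m n) < n)%N by move: hasP; rewrite has_find size_iota.
split=> //; first by move: (nth_find 0%N hasP); rewrite nth_iota.
by move=> k kf; move: (before_find 0%N kf); rewrite nth_iota ?(ltn_trans kf) // => ->.
Qed.

Lemma find_iota_eq (P : pred nat) (m n i : nat) : (i < n)%N -> P (m + i)%N ->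
  (forall j, (j < i)%N -> ~~ P (m + j)%N) -> find P (iota m n) = i.
Proof.
move=> i_n Pi below_i; have [_ Pf before_f] := @find_iotaP P m n (ex_intro2 _ _ i i_n Pi).
apply/eqP; rewrite eqn_leq; apply/andP; split; rewrite leqNgt; apply/negP => lt.
- by move: (before_f _ lt); rewrite Pi.
- by move: (below_i _ lt); rewrite Pf.
Qed.

Section Composition.
Context {p : nat} (n : 'I_p -> nat).
Hypothesis p_gt0 : (0 < p)%N.
Hypothesis n_gt0 : forall a, (0 < n a)%N.
Local Notation N := (ntot n).
Local Open Scope nat_scope.

Lemma cumS {a} (ap : a < p) : cum n a.+1 = cum n a + n (Ordinal ap).
Proof.
rewrite /cum (bigD1 (Ordinal ap)) //= addnC; congr addn.
by apply: eq_bigl => b; rewrite ltnS -val_eqE /= ltn_neqAle andbC.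
Qed.

Lemma leq_cum {a a'} : a <= a' -> cum n a <= cum n a'.
Proof.
move=> aa'; rewrite /cum big_mkcond [X in _ <= X]big_mkcond /=.
by apply: leq_sum => b _; case: ifP => // ba; rewrite (leq_trans ba aa').
Qed.

Lemma cum_ntot {a} : p <= a -> cum n a = N.
Proof. by move=> pa; apply: eq_bigl => b; rewrite (leq_trans (ltn_ord b) pa). Qed.

Lemma cum0 : cum n 0 = 0.
Proof. by rewrite /cum big_pred0. Qed.

Lemma leq_cum_ntot a : cum n a <= N.
Proof. by case: (leqP a p) => [/leq_cum|/ltnW/cum_ntot->] //; rewrite (cum_ntot (leqnn p)). Qed.

Lemma cumS_nblk a : cum n a.+1 = cum n a + nblk n a.
Proof. by rewrite /nblk subnKC // leq_cum. Qed.

Lemma nblk_gt0 {a} : a < p -> 0 < nblk n a.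
Proof. by move=> ap; rewrite /nblk cumS addKn. Qed.

Lemma ntot_gt0 : 0 < N.
Proof. by have := leq_cum_ntot 1; rewrite (cumS p_gt0) cum0; have := n_gt0 (Ordinal p_gt0); lia. Qed.

Lemma blk_bounds i :
  [/\ blk n i < p, cum n (blk n i) <= i %% N & i %% N < cum n (blk n i).+1].
Proof.
have /(@find_iotaP (fun a => i %% N < cum n a.+1))[] : exists2 a, a < p & i %% N < cum n (0 + a).+1.
  by exists p.-1; rewrite ?add0n ?prednK ?cum_ntot ?ltn_mod ?ntot_gt0 //; lia.
rewrite !add0n -/(blk n i) => blk_p blk_ub below; split=> //.
move: below; case: (blk n i) => [|a] below; first by rewrite cum0.
by rewrite leqNgt; apply: below.
Qed.

Lemma ltn_blk i : blk n i < p.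
Proof. by case: (blk_bounds i). Qed.

Lemma blk_eq {a i} : a < p -> cum n a <= i %% N < cum n a.+1 -> blk n i = a.
Proof.
move=> ap /andP[lb ub]; apply: find_iota_eq => // j ja.
by rewrite add0n -leqNgt (leq_trans _ lb) // leq_cum.
Qed.

(* The inverse of [i |-> (blk n i, kk n i)]. *)
Definition bidx a k := k %/ nblk n a * N + (cum n a + k %% nblk n a).

Lemma bidx_divmod {a} k : a < p ->
  bidx a k %/ N = k %/ nblk n a /\ bidx a k %% N = cum n a + k %% nblk n a.
Proof.
move=> ap; have k_mod := ltn_mod k (nblk n a); rewrite nblk_gt0 // in k_mod.
have lt_N : cum n a + k %% nblk n a < N.
  by have := leq_cum_ntot a.+1; rewrite cumS_nblk; lia.
by rewrite /bidx divnMDl ?ntot_gt0 // modnMDl (divn_small lt_N) (modn_small lt_N) addn0.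
Qed.

Lemma blk_bidx {a} k : a < p -> blk n (bidx a k) = a.
Proof.
move=> ap; apply: blk_eq => //; have [_ ->] := bidx_divmod k ap.
have := ltn_mod k (nblk n a); rewrite nblk_gt0 // cumS_nblk; lia.
Qed.

Lemma kk_bidx {a} k : a < p -> kk n (bidx a k) = k.
Proof.
by move=> ap; rewrite /kk blk_bidx //; have [-> ->] := bidx_divmod k ap; rewrite addKn -divn_eq.
Qed.

Lemma bidx_blk_kk i : bidx (blk n i) (kk n i) = i.
Proof.
have [blk_p lb ub] := blk_bounds i; have := nblk_gt0 blk_p.
rewrite /bidx /kk => nblk_pos; set r := i %% N - cum n (blk n i).
have r_lt : r < nblk n (blk n i) by move: ub; rewrite cumS_nblk /r; lia.
rewrite divnMDl // modnMDl (divn_small r_lt) (modn_small r_lt) addn0 subnKC //.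
exact/esym/divn_eq.
Qed.

Lemma bidx_ltS {a} k : a < p -> bidx a k < bidx a k.+1 <= bidx a k + N.
Proof.
move=> ap; have d_gt0 := nblk_gt0 ap; have d_N : nblk n a <= N.
  by have := leq_cum_ntot a.+1; rewrite cumS_nblk; lia.
have e : k.+1 = k %/ nblk n a * nblk n a + (k %% nblk n a).+1 by rewrite addnS -divn_eq.
have k_mod := ltn_mod k (nblk n a); rewrite d_gt0 in k_mod.
rewrite /bidx e divnMDl // modnMDl; case: (ltnP (k %% nblk n a).+1 (nblk n a)) => h.
  by rewrite (divn_small h) (modn_small h); lia.
have -> : (k %% nblk n a).+1 = nblk n a by lia.
by rewrite divnn d_gt0 modnn; nia.
Qed.

Lemma ltn_bidx {a k k'} : a < p -> k < k' -> bidx a k < bidx a k'.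
Proof.
move=> ap; apply: (@homo_ltn _ (bidx a) (fun x y => x < y)); first exact: ltn_trans.
by move=> j; case/andP: (bidx_ltS j ap).
Qed.

Lemma ltn_kk {i j} : blk n i = blk n j -> (i < j) = (kk n i < kk n j).
Proof.
move=> eq_blk; rewrite -{1}(bidx_blk_kk i) -{1}(bidx_blk_kk j) eq_blk.
apply/idP/idP; last exact: ltn_bidx (ltn_blk j).
by apply: contraTT; rewrite -!leqNgt leq_eqVlt => /orP[/eqP->//|/(ltn_bidx (ltn_blk j))/ltnW].
Qed.

(* The next index in the block of [i]: entry [bsucc i] of [chi n a x] is [x] times entry [i]. *)
Definition bsucc i := bidx (blk n i) (kk n i).+1.

Lemma blk_bsucc i : blk n (bsucc i) = blk n i.
Proof. exact/blk_bidx/ltn_blk. Qed.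

Lemma kk_bsucc i : kk n (bsucc i) = (kk n i).+1.
Proof. exact/kk_bidx/ltn_blk. Qed.

Lemma bsucc_bounds i : i < bsucc i <= i + N.
Proof. by have := bidx_ltS (kk n i) (ltn_blk i); rewrite bidx_blk_kk. Qed.

Lemma blk_between {i m} : i < m < bsucc i -> blk n m != blk n i.
Proof.
case/andP=> im mb; apply/eqP => eq_blk.
have eq_blk' : blk n m = blk n (bsucc i) by rewrite blk_bsucc.
by move: im mb; rewrite (ltn_kk (esym eq_blk)) (ltn_kk eq_blk') kk_bsucc; lia.
Qed.

Lemma chi_bsucc {R : nzRingType} a (x : R) i : chi n a x (bsucc i) = (x * chi n a x i)%R.
Proof. by rewrite /chi blk_bsucc kk_bsucc; case: ifP; rewrite ?mulr0 ?exprS. Qed.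

Context {L : nat}.
Hypothesis N_le : N <= L.+1.

Lemma mminus_spec {b} : b < p ->
  [/\ mminus n L b <= L, blk n (mminus n L b) = b &
      forall m, mminus n L b < m <= L -> blk n m != b].
Proof.
move=> bp; have blk_cum : blk n (cum n b) = b.
  by have := blk_bidx 0 bp; rewrite /bidx div0n mod0n mul0n add0n addn0.
have cum_lt : cum n b < N by have := leq_cum_ntot b.+1; rewrite (cumS bp); have := n_gt0 (Ordinal bp); lia.
have /(@find_iotaP (fun d => blk n (L - d) == b))[] : exists2 d, d < L.+1 & blk n (L - (0 + d)) == b.
  by exists (L - cum n b); rewrite ?add0n ?subKn ?blk_cum //; lia.
rewrite /mminus !add0n => _ /eqP-> above; split=> [|//|m /andP[lt le]]; first exact: leq_subr.
by have := above (L - m); rewrite subKn //; apply; lia.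
Qed.

Lemma mminus_bsucc {b} : b < p -> L < bsucc (mminus n L b).
Proof.
move=> bp; have [le eq_blk above] := mminus_spec bp; rewrite ltnNge; apply/negP => sle.
have := above (bsucc (mminus n L b)); rewrite blk_bsucc eq_blk eqxx sle.
by case/andP: (bsucc_bounds (mminus n L b)) => -> _ /(_ isT).
Qed.

Lemma eq_mminus j b : j <= L -> b < p ->
  (j == mminus n L b) = (L < bsucc j) && (blk n j == b).
Proof.
move=> jL bp; have [mL eq_blk above] := mminus_spec bp.
apply/eqP/andP => [->|[Ls /eqP jb]]; first by rewrite mminus_bsucc ?eq_blk.
case: (ltngtP j (mminus n L b)) => // [jm|mj].
  by have := blk_between (i:=j) (m:=mminus n L b); rewrite jm jb eq_blk eqxx; lia.
by have := above j; rewrite mj jL jb eqxx => /(_ isT).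
Qed.

Lemma mplus_bsucc {j} : j <= L -> L < bsucc j -> mplus n L.+1 (blk n j) = bsucc j.
Proof.
move=> jL Ls; rewrite /mplus (@find_iota_eq _ 0 _ (bsucc j - L.+1)).
- by rewrite subnKC.
- by case/andP: (bsucc_bounds j); lia.
- by rewrite add0n subnKC // blk_bsucc.
by move=> d dlt; rewrite add0n blk_between //; apply/andP; lia.
Qed.

Lemma sum_mminus {R : nzRingType} (F : nat -> 'I_L.+1 -> R) :
  (\sum_(b < p) \sum_(j < L.+1) ((j : nat) == mminus n L b)%:R * F b j =
   \sum_(j < L.+1) if (L < bsucc j)%N then F (blk n j) j else 0)%R.
Proof.
rewrite exchange_big /=; apply: eq_bigr => j _.
have jL : j <= L by rewrite -ltnS.
under eq_bigr do rewrite eq_mminus ?ltn_ord //.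
case: ifP => Ls /=; last by rewrite big1 // => b _; rewrite mul0r.
rewrite (bigD1 (Ordinal (ltn_blk j))) //= eqxx mul1r big1 ?addr0 // => b.
by rewrite -val_eqE /= eq_sym => /negbTE->; rewrite mul0r.
Qed.

End Composition.

(** * The kernel as a bilinear form *)

Lemma big_ord_widen0 (R : nmodType) (m l : nat) (F : nat -> R) : (m <= l)%N ->
  (forall j, (m <= j < l)%N -> F j = 0) -> \sum_(j < m) F j = \sum_(j < l) F j.
Proof.
move=> ml F0; rewrite (big_ord_widen _ _ ml) big_mkcond; apply: eq_bigr => j _.
by case: ifP => // /negbT; rewrite -leqNgt => mj; rewrite F0 // mj ltn_ord.
Qed.

Lemma invmx_uniq (R : comUnitRingType) n (A B : 'M[R]_n) :
  A \in unitmx -> A *m B = 1%:M -> invmx A = B.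
Proof. by move=> A_unit AB; rewrite -[RHS](mulKmx A_unit) AB mulmx1. Qed.

Section TruncUpper.
Context {R : fieldType} {U : nat -> nat -> R}.
Hypothesis U_upper : forall i j, (j < i)%N -> U i j = 0.
Hypothesis U_unit : forall m, trunc U m \in unitmx.

Lemma invmx_trunc_upper l (j k : 'I_l) : invmx (trunc U l) j k =
  if (j <= k)%N then invmx (trunc U k.+1) (inord j) ord_max else 0.
Proof.
set B := \matrix_(j < l, k < l)
  (if (j <= k)%N then invmx (trunc U k.+1) (inord j) ord_max else 0).
suff -> : invmx (trunc U l) = B by rewrite mxE.
apply: invmx_uniq => //; apply/matrixP => {j k} i k; rewrite [LHS]mxE [RHS]mxE.
pose F j := U i j * (if (j <= k)%N then invmx (trunc U k.+1) (inord j) ord_max else 0).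
rewrite (eq_bigr (fun j : 'I_l => F j)) => [|j _]; last by rewrite !mxE.
rewrite -(@big_ord_widen0 _ k.+1) => [||j /andP[kj _]]; last 2 first.
- exact: ltn_ord.
- by rewrite /F leqNgt kj mulr0.
rewrite /F; under eq_bigr => j _ do rewrite -ltnS ltn_ord.
case: (leqP i k) => [ik|ki].
- have := mulmxV (U_unit k.+1); move/matrixP/(_ (inord i) ord_max); rewrite !mxE.
  rewrite -val_eqE /= inordK ?ltnS // => <-; apply: eq_bigr => j _.
  by rewrite !mxE inordK // inord_val.
- rewrite big1 => [|j _]; last by rewrite U_upper ?mul0r // (leq_trans _ ki).
  by rewrite eq_sym; case: eqP => // ik; move: ki; rewrite ik ltnn.
Qed.

End TruncUpper.

Section GaussBorel.
Context {R : fieldType} {S Sbar g : nat -> nat -> R}.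
Hypothesis S_diag : forall i, S i i = 1.
Hypothesis S_lower : forall i j, (i < j)%N -> S i j = 0.
Hypothesis Sbar_upper : forall i j, (j < i)%N -> Sbar i j = 0.
Hypothesis S_g : forall i j, \sum_(k < i.+1) S i k * g k j = Sbar i j.
Hypothesis g_unit : forall m, trunc g m \in unitmx.

Lemma trunc_S_g m : trunc S m *m trunc g m = trunc Sbar m.
Proof.
apply/matrixP => i j; rewrite !mxE -S_g (@big_ord_widen0 _ i.+1 m (fun k => S i k * g k j)).
- by apply: eq_bigr => k _; rewrite !mxE.
- exact: ltn_ord.
- by move=> k /andP[ik _]; rewrite S_lower ?mul0r.
Qed.

Lemma trunc_S_unit m : trunc S m \in unitmx.
Proof.
rewrite unitmxE det_trig; last by apply/is_trig_mxP => i j ij; rewrite mxE S_lower.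
by rewrite big1 ?unitr1 // => i _; rewrite mxE S_diag.
Qed.

Lemma trunc_Sbar_unit m : trunc Sbar m \in unitmx.
Proof. by rewrite -trunc_S_g unitmx_mul trunc_S_unit g_unit. Qed.

Lemma invmx_trunc_g m : invmx (trunc g m) = invmx (trunc Sbar m) *m trunc S m.
Proof.
apply: invmx_uniq => //; rewrite -[trunc g m](mulKmx (trunc_S_unit m)) trunc_S_g.
by rewrite mulmxA mulmxK ?trunc_Sbar_unit // mulVmx ?trunc_S_unit.
Qed.

Lemma Apol_mx p1 (n1 : 'I_p1 -> nat) a l (k : 'I_l) (y : R) :
  Apol S n1 a k y = (trunc S l *m chiv n1 a y l) k 0.
Proof.
rewrite /Apol mxE (@big_ord_widen0 _ k.+1 l (fun j => S k j * chi n1 a y j)).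
- by apply: eq_bigr => j _; rewrite !mxE.
- exact: ltn_ord.
- by move=> j /andP[kj _]; rewrite S_lower ?mul0r.
Qed.

Lemma Abarpol_mx p2 (n2 : 'I_p2 -> nat) b l (k : 'I_l) (x : R) :
  Abarpol Sbar n2 b k x = ((chiv n2 b x l)^T *m invmx (trunc Sbar l)) 0 k.
Proof.
pose F j := (if (j <= k)%N then invmx (trunc Sbar k.+1) (inord j) ord_max else 0) * chi n2 b x j.
rewrite mxE (eq_bigr (fun j : 'I_l => F j)) => [|j _]; last first.
  by rewrite !mxE (invmx_trunc_upper Sbar_upper trunc_Sbar_unit) mulrC.
rewrite -(@big_ord_widen0 _ k.+1) => [||j /andP[kj _]]; last 2 first.
- exact: ltn_ord.
- by rewrite /F leqNgt kj mul0r.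
by apply: eq_bigr => j _; rewrite /F -ltnS ltn_ord inord_val.
Qed.

Lemma Kab_invmx p1 p2 (n1 : 'I_p1 -> nat) (n2 : 'I_p2 -> nat) b' a' l (x y : R) :
  Kab S Sbar n1 n2 b' a' l x y =
  ((chiv n2 b' x l)^T *m invmx (trunc g l) *m chiv n1 a' y l) 0 0.
Proof.
rewrite invmx_trunc_g !mulmxA -[_ *m trunc S l *m _]mulmxA mxE.
by apply: eq_bigr => k _; rewrite Abarpol_mx Apol_mx.
Qed.

End GaussBorel.

(** * The Christoffel-Darboux identity *)

Section ChristoffelDarboux.
Context {R : fieldType} {p1 p2 : nat} (n1 : 'I_p1 -> nat) (n2 : 'I_p2 -> nat).
Hypotheses (p1_gt0 : (0 < p1)%N) (p2_gt0 : (0 < p2)%N).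
Hypotheses (n1_gt0 : forall a, (0 < n1 a)%N) (n2_gt0 : forall b, (0 < n2 b)%N).
Variables (g : nat -> nat -> R) (L : nat).
Hypotheses (N1_le : (ntot n1 <= L.+1)%N) (N2_le : (ntot n2 <= L.+1)%N).
Hypothesis g_unit : trunc g L.+1 \in unitmx.
Hypothesis g_bsucc : forall i j, g (bsucc n1 i) j = g i (bsucc n2 j).
Variables (a' b' : nat) (x y : R).

Local Notation l := L.+1.
Local Notation zz := ((chiv n2 b' x l)^T *m invmx (trunc g l)).
Local Notation ww := (invmx (trunc g l) *m chiv n1 a' y l).

Definition Abarplus_at m := chi n2 b' x m - \sum_(i < l) zz 0 i * g i m.
Definition Aplus_at m := chi n1 a' y m - \sum_(j < l) g m j * ww j 0.

Lemma Abarplus_atE b : Abarplus g n2 b b' l x = Abarplus_at (mplus n2 l b).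
Proof. by rewrite /Abarplus mxE; congr (_ - _); apply: eq_bigr => i _; congr (_ * _); rewrite mxE. Qed.

Lemma Aplus_atE a : Aplus g n1 a a' l y = Aplus_at (mplus n1 l a).
Proof. by rewrite /Aplus -mulmxA mxE; congr (_ - _); apply: eq_bigr => j _; congr (_ * _); rewrite mxE. Qed.

Lemma Abarplus_at_small m : (m < l)%N -> Abarplus_at m = 0.
Proof.
move=> ml; have /matrixP/(_ 0 (Ordinal ml)) := mulmxKV g_unit (chiv n2 b' x l)^T.
rewrite /Abarplus_at !mxE => <-; apply/eqP; rewrite subr_eq0; apply/eqP.
by apply: eq_bigr => i _; congr (_ * _); rewrite mxE.
Qed.

Lemma Aplus_at_small m : (m < l)%N -> Aplus_at m = 0.
Proof.
move=> ml; have /matrixP/(_ (Ordinal ml) 0) := mulKVmx g_unit (chiv n1 a' y l).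
rewrite /Aplus_at !mxE => <-; apply/eqP; rewrite subr_eq0; apply/eqP.
by apply: eq_bigr => j _; congr (_ * _); rewrite mxE.
Qed.

Lemma Aminus_ww b :
  Aminus g n1 n2 b a' L y = \sum_(j < l) ((j : nat) == mminus n2 L b)%:R * ww j 0.
Proof. by rewrite /Aminus -mulmxA mxE; apply: eq_bigr => j _; congr (_ * _); rewrite mxE. Qed.

Lemma Abarminus_zz a :
  Abarminus g n1 n2 a b' L x = \sum_(i < l) zz 0 i * ((i : nat) == mminus n1 L a)%:R.
Proof. by rewrite /Abarminus mxE; apply: eq_bigr => i _; congr (_ * _); rewrite mxE. Qed.

Lemma boundary_mulX :
  \sum_(j < l) Abarplus_at (bsucc n2 j) * ww j 0 =
  \sum_(b < p2) Abarplus g n2 b b' l x * Aminus g n1 n2 b a' L y.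
Proof.
under [RHS]eq_bigr do rewrite Aminus_ww mulr_sumr.
under [RHS]eq_bigr do under eq_bigr do rewrite mulrCA.
rewrite (sum_mminus n2 p2_gt0 n2_gt0 N2_le (fun b j => Abarplus g n2 b b' l x * ww j 0)).
apply: eq_bigr => j _; have jL : (j <= L)%N by rewrite -ltnS.
case: ifP => Ls; first by rewrite Abarplus_atE (mplus_bsucc n2 p2_gt0 n2_gt0 N2_le jL Ls).
by rewrite Abarplus_at_small ?mul0r // ltnS leqNgt Ls.
Qed.

Lemma boundary_mulY :
  \sum_(i < l) zz 0 i * Aplus_at (bsucc n1 i) =
  \sum_(a < p1) Abarminus g n1 n2 a b' L x * Aplus g n1 a a' l y.
Proof.
under [RHS]eq_bigr do rewrite Abarminus_zz mulr_suml.
under [RHS]eq_bigr do under eq_bigr do rewrite [_ * _%:R]mulrC -mulrA.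
rewrite (sum_mminus n1 p1_gt0 n1_gt0 N1_le (fun a i => zz 0 i * Aplus g n1 a a' l y)).
apply: eq_bigr => i _; have iL : (i <= L)%N by rewrite -ltnS.
case: ifP => Ls; first by rewrite Aplus_atE (mplus_bsucc n1 p1_gt0 n1_gt0 N1_le iL Ls).
by rewrite Aplus_at_small ?mulr0 // ltnS leqNgt Ls.
Qed.

Local Notation K := (((chiv n2 b' x l)^T *m invmx (trunc g l) *m chiv n1 a' y l) 0 0).

Lemma mulX_kernel : x * K =
  \sum_(j < l) \sum_(i < l) zz 0 i * g i (bsucc n2 j) * ww j 0 +
  \sum_(b < p2) Abarplus g n2 b b' l x * Aminus g n1 n2 b a' L y.
Proof.
have K_ww : K = \sum_(j < l) chi n2 b' x j * ww j 0.
  by rewrite -mulmxA mxE; apply: eq_bigr => j _; congr (_ * _); rewrite !mxE.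
rewrite -boundary_mulX K_ww mulr_sumr -big_split; apply: eq_bigr => j _ /=.
rewrite mulrA -(chi_bsucc n2 p2_gt0 n2_gt0) -mulr_suml -mulrDl.
by rewrite /Abarplus_at addrC subrK.
Qed.

Lemma mulY_kernel : y * K =
  \sum_(i < l) \sum_(j < l) zz 0 i * g (bsucc n1 i) j * ww j 0 +
  \sum_(a < p1) Abarminus g n1 n2 a b' L x * Aplus g n1 a a' l y.
Proof.
have K_zz : K = \sum_(i < l) zz 0 i * chi n1 a' y i.
  by rewrite mxE; apply: eq_bigr => i _; congr (_ * _); rewrite !mxE.
rewrite -boundary_mulY K_zz mulr_sumr -big_split; apply: eq_bigr => i _ /=.
under eq_bigr do rewrite -mulrA.
rewrite mulrCA -(chi_bsucc n1 p1_gt0 n1_gt0) -mulr_sumr -mulrDr.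
by rewrite /Aplus_at addrC subrK.
Qed.

Lemma CD_bilinear : (x - y) * K =
  \sum_(b < p2) Abarplus g n2 b b' l x * Aminus g n1 n2 b a' L y -
  \sum_(a < p1) Abarminus g n1 n2 a b' L x * Aplus g n1 a a' l y.
Proof.
rewrite mulrBl mulX_kernel mulY_kernel exchange_big /=.
under eq_bigr do under eq_bigr do rewrite -g_bsucc.
by rewrite opprD addrACA subrr add0r.
Qed.

End ChristoffelDarboux.

(** * Weighting by [w_1] and [w_2] *)

Lemma mul_weighted_sums (R : comRingType) p q (f u : 'I_p -> R) (h v : 'I_q -> R) :
  (\sum_(i < p) f i * u i) * (\sum_(j < q) h j * v j) =
  \sum_(j < q) \sum_(i < p) v j * u i * (f i * h j).
Proof.
rewrite big_distrlr exchange_big /=.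
by apply: eq_bigr => j _; apply: eq_bigr => i _; ring.
Qed.

Lemma sum_weighted_mul (R : comRingType) p1 p2 q (u : 'I_p1 -> R) (v : 'I_p2 -> R)
    (F : 'I_q -> 'I_p2 -> R) (G : 'I_q -> 'I_p1 -> R) :
  \sum_(a' < p1) \sum_(b' < p2) u a' * v b' * (\sum_(b < q) F b b' * G b a') =
  \sum_(b < q) (\sum_(b' < p2) F b b' * v b') * (\sum_(a' < p1) G b a' * u a').
Proof.
under [RHS]eq_bigr do rewrite mul_weighted_sums.
rewrite [RHS]exchange_big; apply: eq_bigr => a' _ /=.
by rewrite [RHS]exchange_big; apply: eq_bigr => b' _ /=; rewrite mulr_sumr.
Qed.

Lemma weighted_identity (R : comRingType) p1 p2 q1 q2 (c : R) (u : 'I_p1 -> R) (v : 'I_p2 -> R)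
    (K : 'I_p2 -> 'I_p1 -> R) (P : 'I_q2 -> 'I_p2 -> R) (M : 'I_q2 -> 'I_p1 -> R)
    (Q : 'I_q1 -> 'I_p2 -> R) (N : 'I_q1 -> 'I_p1 -> R) :
  (forall a' b', c * K b' a' = \sum_(b < q2) P b b' * M b a' - \sum_(a < q1) Q a b' * N a a') ->
  c * \sum_(a' < p1) \sum_(b' < p2) u a' * v b' * K b' a' =
  \sum_(b < q2) (\sum_(b' < p2) P b b' * v b') * (\sum_(a' < p1) M b a' * u a') -
  \sum_(a < q1) (\sum_(b' < p2) Q a b' * v b') * (\sum_(a' < p1) N a a' * u a').
Proof.
move=> cK; rewrite mulr_sumr; under eq_bigr do rewrite mulr_sumr.
under eq_bigr do under eq_bigr do rewrite mulrCA cK mulrBr.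
by under eq_bigr do rewrite sumrB; rewrite sumrB !sum_weighted_mul.
Qed.

Lemma Kfull_Kab (R : fieldType) S Sbar p1 p2 (n1 : 'I_p1 -> nat) (n2 : 'I_p2 -> nat)
    (w1 w2 : nat -> R -> R) l (x y : R) :
  Kfull S Sbar n1 n2 w1 w2 l x y =
  \sum_(a' < p1) \sum_(b' < p2) w1 a' y * w2 b' x * Kab S Sbar n1 n2 b' a' l x y.
Proof.
rewrite /Kfull /Kab.
under eq_bigr do rewrite /Qform /Qbarform mul_weighted_sums.
rewrite exchange_big; under eq_bigr do rewrite exchange_big; rewrite exchange_big /=.
apply: eq_bigr => a' _; apply: eq_bigr => b' _; rewrite mulr_sumr.
by apply: eq_bigr => k _; ring.
Qed.

Lemma gmom_bsucc {R : realType} (mu : {measure set R -> \bar R}) (D : set R)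
    {p1 p2} {n1 : 'I_p1 -> nat} {n2 : 'I_p2 -> nat} (w1 w2 : nat -> R -> R)
    (p1_gt0 : (0 < p1)%N) (p2_gt0 : (0 < p2)%N)
    (n1_gt0 : forall a, (0 < n1 a)%N) (n2_gt0 : forall b, (0 < n2 b)%N) i j :
  gmom mu D n1 n2 w1 w2 (bsucc n1 i) j = gmom mu D n1 n2 w1 w2 i (bsucc n2 j).
Proof.
rewrite /gmom (kk_bsucc n1 p1_gt0 n1_gt0) (blk_bsucc n1 p1_gt0 n1_gt0).
by rewrite (kk_bsucc n2 p2_gt0 n2_gt0) (blk_bsucc n2 p2_gt0 n2_gt0) addSn addnS.
Qed.

Theorem theorem2p4 (R : realType) (mu : {finite_measure set R -> \bar R})
  (I : interval R) (p1 p2 : nat) (n1 : 'I_p1 -> nat) (n2 : 'I_p2 -> nat)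
  (w1 w2 : nat -> R -> R)
  (hp1 : (0 < p1)%N) (hp2 : (0 < p2)%N)
  (hn1 : forall a, (0 < n1 a)%N) (hn2 : forall b, (0 < n2 b)%N)
  (hint : forall (k a b : nat), (a < p1)%N -> (b < p2)%N ->
     mu.-integrable [set` I] (fun x => (x ^+ k * w1 a x * w2 b x)%:E))
  (hdet : forall l, \det (trunc (gmom mu [set` I] n1 n2 w1 w2) l) != 0)
  (S Sbar : nat -> nat -> R)
  (hS1 : forall i, S i i = 1)
  (hS0 : forall i j, (i < j)%N -> S i j = 0)
  (hSbar0 : forall i j, (j < i)%N -> Sbar i j = 0)
  (hGB : forall i j, \sum_(k < i.+1) S i k * gmom mu [set` I] n1 n2 w1 w2 k j = Sbar i j)
  (l : nat) (hl : (maxn (ntot n1) (ntot n2) <= l)%N) :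
  (forall (a' b' : nat) (x y : R), (a' < p1)%N -> (b' < p2)%N ->
     (x - y) * Kab S Sbar n1 n2 b' a' l x y =
       \sum_(b < p2) Abarplus (gmom mu [set` I] n1 n2 w1 w2) n2 b b' l x
                      * Aminus (gmom mu [set` I] n1 n2 w1 w2) n1 n2 b a' l.-1 y
     - \sum_(a < p1) Abarminus (gmom mu [set` I] n1 n2 w1 w2) n1 n2 a b' l.-1 x
                      * Aplus (gmom mu [set` I] n1 n2 w1 w2) n1 a a' l y)
  /\
  (forall x y : R,
     (x - y) * Kfull S Sbar n1 n2 w1 w2 l x y =
       \sum_(b < p2) Qbarplus (gmom mu [set` I] n1 n2 w1 w2) n2 w2 b l x
                      * Qminus (gmom mu [set` I] n1 n2 w1 w2) n1 n2 w1 b l.-1 y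
     - \sum_(a < p1) Qbarminus (gmom mu [set` I] n1 n2 w1 w2) n1 n2 w2 a l.-1 x
                      * Qplus (gmom mu [set` I] n1 n2 w1 w2) n1 w1 a l y).
Proof.
set g := gmom mu [set` I] n1 n2 w1 w2.
have g_unit m : trunc g m \in unitmx by rewrite unitmxE unitfE hdet.
have g_bsucc := gmom_bsucc mu [set` I] w1 w2 hp1 hp2 hn1 hn2.
move: hl; rewrite geq_max => /andP[N1_le N2_le].
case: l N1_le N2_le => [|L] N1_le N2_le.
  by have := ntot_gt0 n1 hp1 hn1; rewrite leqn0 in N1_le; rewrite (eqP N1_le).
have CD a' b' x y : (x - y) * Kab S Sbar n1 n2 b' a' L.+1 x y =
    \sum_(b < p2) Abarplus g n2 b b' L.+1 x * Aminus g n1 n2 b a' L y -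
    \sum_(a < p1) Abarminus g n1 n2 a b' L x * Aplus g n1 a a' L.+1 y.
  by rewrite (Kab_invmx hS1 hS0 hSbar0 hGB g_unit) CD_bilinear.
split=> [a' b' x y _ _ | x y]; first exact: CD.
by rewrite Kfull_Kab; apply: weighted_identity => a' b'; exact: CD.
Qed.
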